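(* Let $v\equiv 1$ or $7\pmod{24}$ with $v\ge 7$, and let $n=\frac{v-1}{6}$. For every integer $i$ with $0\le i\le n$ there exists a cyclic three-fold triple system CTS$(v,3)$ with fine structure $(c_1,c_2,c_3)$ satisfying $c_2=n-i$ and $c_3=i$ (and hence $c_1=3n-2c_2-3c_3$).
   Context: A cyclic $\lambda$-fold triple system CTS$(v,\lambda)$ is a multiset $\mathcal B$ of 3-element subsets (blocks) of $\mathbb Z_v$ such that every 2-element subset of $\mathbb Z_v$ is contained in exactly $\lambda$ blocks (counted with multiplicity), and $\mathcal B$ is invariant under the translation $x\mapsto x+1$. Thus $\mathcal B$ is a union of translation orbits of 3-subsets with multiplicities; a base block is an orbit representative. The fine structure is $(c_1,\ldots,c_\lambda)$, where $c_i$ is the number of distinct base blocks (orbits) occurring with multiplicity exactly $i$. For $\lambda=3$ the paper writes the fine structure as the pair $(t,s)=(c_2,c_3)$. *)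

(* Cyclic lambda-fold triple systems on Z_v, represented on 'I_v
   with the cyclic successor ordS (i |-> (i+1) mod v). *)
From mathcomp Require Import all_boot.
Set Implicit Arguments. Unset Strict Implicit. Unset Printing Implicit Defensive.

Definition shiftB (v : nat) (B : {set 'I_v}) : {set 'I_v} := [set ordS x | x in B].

(* A multiset of blocks is a multiplicity function m on subsets of Z_v. *)
Definition is_CTS (v lambda : nat) (m : {ffun {set 'I_v} -> nat}) : Prop :=
  [/\ (forall B, 0 < m B -> #|B| = 3),
      (forall x y : 'I_v, x != y ->
          \sum_(B : {set 'I_v} | (x \in B) && (y \in B)) m B = lambda)
    & (forall B, m (shiftB B) = m B)].

Definition orbitB (v : nat) (B : {set 'I_v}) : {set {set 'I_v}} :=
  [set iter k (@shiftB v) B | k : 'I_v].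

Definition fine_c (v : nat) (m : {ffun {set 'I_v} -> nat}) (i : nat) : nat :=
  #|[set orbitB B | B in [set B : {set 'I_v} | m B == i]]|.

(* Write v = 6n + 1; the congruence on v says exactly that n = 0 or 1 (mod 4),
   so a Skolem sequence of order n exists, and its pairs of positions
   (f k, f k + k) turn into triples {k, n + f k, n + f k + k} that partition
   {1, ..., 3n}. A triple {a, b, a + b} gives two base blocks {0, a, a + b} and
   {0, b, a + b} of Z_v, each covering the differences +-a, +-b, +-(a + b) once.
   Their orbits are full because 3 is prime to v, and the 2n orbits are pairwise
   distinct: blocks of different triples have different differences, and the two
   blocks of one triple are not translates of each other because 2(a + b) < v.
   Taking, for i of the triples, the first block three times and the second not
   at all, and for the other n - i triples the blocks twice and once, every
   difference is covered exactly three times, with i, n - i and n - i orbits of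
   multiplicity 3, 2 and 1. *)

From mathcomp Require Import all_boot all_algebra zify ring.
Set Implicit Arguments. Unset Strict Implicit. Unset Printing Implicit Defensive.
Import GRing.Theory.

Lemma sum_pair_bool (T : finType) (F : T * bool -> nat) :
  \sum_X F X = \sum_t (F (t, true) + F (t, false)).
Proof.
rewrite (eq_bigr (fun X => F (X.1, X.2))) => [|[] //].
by rewrite -(pair_bigA _ (fun t e => F (t, e))); apply: eq_bigr => t _; rewrite big_bool.
Qed.

Lemma sum_ord_lt n i : i <= n -> \sum_(j < n) (j < i) = i.
Proof.
move=> le_in; rewrite (eq_bigr (fun j : 'I_n => if j < i then 1 else 0)) => [|j _]; last first.
  by case: ltnP.
by rewrite -big_mkcond big_ord_narrow //= sum1_card card_ord.
Qed.

Lemma sum_ord_ge n i : i <= n -> \sum_(j < n) (i <= j) = n - i.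
Proof.
move=> le_in; have : \sum_(j < n) (j < i) + \sum_(j < n) (i <= j) = n.
  by rewrite -big_split /= -[RHS]card_ord -sum1_card; apply: eq_bigr => j _; case: ltnP.
by rewrite sum_ord_lt //; lia.
Qed.

Lemma inj_sum_cover (T : finType) (g : T -> nat) N :
  #|T| = N -> (forall X, 0 < g X <= N) -> injective g ->
  forall P, 0 < P <= N -> \sum_X (P == g X) = 1.
Proof.
move=> cardT range g_inj P P_range.
have [_ memE] : (size (map g (enum T)) = size (iota 1 N)) * (map g (enum T) =i iota 1 N).
  apply: uniq_min_size; first by rewrite map_inj_uniq ?enum_uniq.
    by move=> _ /mapP [X _ ->]; rewrite mem_iota; have := range X; lia.
  by rewrite size_map size_iota -cardE cardT.
have /mapP [X0 _ ->] : P \in map g (enum T) by rewrite memE mem_iota; lia.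
rewrite (bigD1 X0) //= eqxx big1 // => X; rewrite eq_sym (inj_eq g_inj).
by move=> /negbTE ->.
Qed.

Section Translation.

Local Open Scope ring_scope.

Variable G : finZmodType.
Implicit Types (X : {set G}) (d k l t u x y : G).

Definition transl k X : {set G} := [set u | u - k \in X].

Lemma mem_transl k X u : (u \in transl k X) = (u - k \in X).
Proof. by rewrite inE. Qed.

Lemma transl0 X : transl 0 X = X.
Proof. by apply/setP => u; rewrite inE subr0. Qed.

Lemma translD k l X : transl k (transl l X) = transl (k + l) X.
Proof. by apply/setP => u; rewrite !inE opprD addrA. Qed.

Lemma translK k : cancel (transl k) (transl (- k)).
Proof. by move=> X; rewrite translD addNr transl0. Qed.

Lemma big_transl (R : Type) (idx : R) (op : Monoid.com_law idx) k X (F : G -> R) :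
  \big[op/idx]_(u in transl k X) F u = \big[op/idx]_(u in X) F (u + k).
Proof.
rewrite (reindex_inj (addIr k)) /=.
by apply: eq_bigl => u; rewrite mem_transl addrK.
Qed.

Lemma card_transl k X : #|transl k X| = #|X|.
Proof. by rewrite -!sum1_card big_transl. Qed.

(* Compare the sums of the elements of [X] and of [transl t X]. *)
Lemma transl_fixed t X : transl t X = X -> t *+ #|X| = 0.
Proof.
move=> fixX; apply: (@addrI _ (\sum_(u in X) u)); rewrite addr0.
rewrite -[in RHS]fixX big_transl big_split /= sumr_const.
by congr (_ + _); apply: eq_bigl.
Qed.

Definition diffcount X d : nat := (\sum_(u in X) (u + d \in X)%R)%N.

Lemma diffcount_transl k X d : diffcount (transl k X) d = diffcount X d.
Proof.
rewrite /diffcount big_transl; apply: eq_bigr => u _.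
by rewrite mem_transl addrAC addrK.
Qed.

Lemma sum_mem2_transl X x y :
  (\sum_k ((x \in transl k X) && (y \in transl k X)))%N = diffcount X (y - x).
Proof.
rewrite /diffcount [RHS]big_mkcond (reindex_inj (subrI x)) /=.
apply: eq_bigr => u _; rewrite !mem_transl subKr.
have -> : y - (x - u) = u + (y - x) by rewrite opprB addrCA.
by case: (u \in X).
Qed.

Definition triple_diffs x y d : nat :=
  ((d == x) + (d == y) + (d == x + y)%R + (d == - x)%R + (d == - y)%R + (d == - (x + y))%R)%N.

Lemma triple_diffsC x y d : triple_diffs y x d = triple_diffs x y d.
Proof. by rewrite /triple_diffs (addrC y x); ring. Qed.

Lemma triple_diffsN x y d : triple_diffs x y (- d) = triple_diffs x y d.
Proof. by rewrite /triple_diffs !eqr_oppLR !opprK; ring. Qed.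

Definition triangle x y : {set G} := [set 0; x; x + y].

Lemma card_triangle x y : x != 0 -> y != 0 -> x + y != 0 -> #|triangle x y| = 3.
Proof.
move=> x0 y0 xy0.
have xyx : (x + y == x) = false by rewrite -{2}(addr0 x) (inj_eq (addrI x)) (negbTE y0).
by rewrite /triangle setUC cardsU1 cards2 !inE (negbTE xy0) xyx eq_sym x0.
Qed.

Lemma diffcount_triangle x y d : x != 0 -> y != 0 -> x + y != 0 -> d != 0 ->
  diffcount (triangle x y) d = triple_diffs x y d.
Proof.
move=> x0 y0 xy0 d0.
have xxy : x != x + y by rewrite -{1}(addr0 x) (inj_eq (addrI x)) eq_sym.
set X := triangle x y.
have memE u : (u \in X : nat) = ((u == 0%R) + (u == x) + (u == x + y)%R)%N.
  rewrite !inE; case: (eqVneq u 0) => [->|_].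
    by rewrite eq_sym (negbTE x0) eq_sym (negbTE xy0).
  by case: (eqVneq u x) => [->|_]; [rewrite (negbTE xxy) | case: (u == x + y)].
have addE u v : (u + d == v) = (d == v - u).
  by apply/eqP/eqP => [<- | ->]; [rewrite addrC addKr | rewrite addrC subrK].
have subE1 : x + y - x = y by rewrite addrAC subrr add0r.
have subE2 : x - (x + y) = - y by rewrite opprD addrA subrr add0r.
rewrite /diffcount -/X {1}/X /triangle setUC !big_setU1 ?big_set1 /=; first last.
- by rewrite !inE; apply/norP; split; [exact: xy0 | rewrite eq_sym].
- by rewrite inE eq_sym.
rewrite !memE !addE !subrr !subr0 !sub0r subE1 subE2 (negbTE d0) /triple_diffs.
rewrite /= !addn0 !add0n; ring.
Qed.

End Translation.

Section CyclicOrbits.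

Local Open Scope ring_scope.

Variable w : nat.
Local Notation V := w.+2.
Implicit Types (B X : {set 'I_V}) (k l : 'I_V).

Lemma shiftB_transl X : shiftB X = transl 1 X.
Proof.
have ordSE x : ordS x = x + 1 :> 'I_V by apply: val_inj; rewrite /= modnDmr addn1.
apply/setP => y; rewrite mem_transl; apply/imsetP/idP => [[x Xx ->] | Xy].
  by rewrite ordSE addrK.
by exists (y - 1); rewrite // ordSE subrK.
Qed.

Lemma orbitBE X : orbitB X = [set transl k X | k : 'I_V].
Proof.
have iterE n : iter n (@shiftB V) X = transl n%:R X.
  elim: n => [|n IHn]; first by rewrite transl0.
  by rewrite iterS IHn shiftB_transl translD addrC -mulrSr.
by apply/setP => B; apply/imsetP/imsetP => -[k _ ->]; exists k; rewrite ?iterE ?natr_Zp.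
Qed.

Lemma orbitBP B X : reflect (exists k, B = transl k X) (B \in orbitB X).
Proof. by rewrite orbitBE; apply: (iffP imsetP) => [[k _ ->] | [k ->]]; exists k. Qed.

Lemma orbitB_id X : X \in orbitB X.
Proof. by apply/orbitBP; exists 0; rewrite transl0. Qed.

Lemma mem_orbitB_transl k B X : (transl k B \in orbitB X) = (B \in orbitB X).
Proof.
apply/orbitBP/orbitBP => -[l E]; [exists (- k + l) | exists (k + l)].
  by rewrite -translD -E translK.
by rewrite -translD -E.
Qed.

Lemma orbitB_transl k X : orbitB (transl k X) = orbitB X.
Proof.
rewrite !orbitBE; apply/setP => B; apply/imsetP/imsetP => -[l _ ->].
  by exists (l + k); rewrite ?translD.
by exists (l - k); rewrite ?translD ?subrK.
Qed.

Lemma orbitB_mem B X : B \in orbitB X -> orbitB B = orbitB X.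
Proof. by case/orbitBP => k ->; rewrite orbitB_transl. Qed.

Lemma transl_inj X : coprime #|X| V -> injective (fun k => transl k X).
Proof.
move=> coXV k l /= eqkl; apply/eqP; rewrite -subr_eq0; apply/eqP.
have := translK l X; rewrite -eqkl translD addrC; move: (k - l) => t.
move=> /transl_fixed/(congr1 val); rewrite Zp_mulrn /= => /eqP.
rewrite -/(dvdn V _) Gauss_dvdl; last by rewrite coprime_sym.
by rewrite /dvdn modn_small // => /eqP t0; apply: val_inj.
Qed.

Lemma val_opp (d : 'I_V) : val (- d) = ((V - val d) %% V)%N.
Proof. by []. Qed.

Lemma eq_natr (d : 'I_V) p : (p < V)%N -> (d == p%:R) = (val d == p).
Proof. by move=> pV; rewrite -val_eqE Zp_nat /= modn_small. Qed.

Lemma eq_opp_natr (d : 'I_V) p : (0 < p < V)%N -> (d == - p%:R) = (val d + p == V)%N.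
Proof.
move=> /andP [p0 pV]; rewrite -eqr_oppLR eq_natr // val_opp.
have dV : (val d < V)%N := ltn_ord d.
case: (posnP (val d)) => [-> | d0]; first by rewrite subn0 modnn; apply/eqP/eqP; lia.
by rewrite modn_small; [apply/eqP/eqP | ]; lia.
Qed.

Lemma triple_diffs_natr (d : 'I_V) p q : (0 < p)%N -> (0 < q)%N -> (val d + (p + q) < V)%N ->
  triple_diffs p%:R q%:R d = ((val d == p) + (val d == q) + (val d == p + q))%N.
Proof.
by move=> p0 q0 small; rewrite /triple_diffs -natrD !eq_opp_natr ?eq_natr; lia.
Qed.

Lemma val_add (x y : 'I_V) : val (x + y : 'I_V) = ((val x + val y) %% V)%N.
Proof. by []. Qed.

Lemma val_natr p : (p < V)%N -> val (p%:R : 'I_V) = p.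
Proof. by move=> pV; rewrite Zp_nat /= modn_small. Qed.

Lemma natr_eq0_Zp p : (p < V)%N -> ((p%:R : 'I_V) == 0) = (p == 0%N).
Proof. by move=> pV; rewrite -val_eqE val_natr. Qed.

Lemma mem_triangle_natr p q (u : 'I_V) : (p + q < V)%N ->
  (u \in triangle (p%:R : 'I_V) q%:R) = [|| val u == 0, val u == p | val u == p + q]%N.
Proof.
move=> pqV; rewrite !inE -natrD !eq_natr; try lia.
by rewrite -[0%N]/(val (0 : 'I_V)) val_eqE orbA.
Qed.

Lemma triangle_transl_neq p q t : (0 < p)%N -> (0 < q)%N -> p != q -> ((p + q).*2 < V)%N ->
  triangle (p%:R : 'I_V) q%:R != transl t (triangle q%:R p%:R).
Proof.
move=> p0 q0 pq small; apply/negP => /eqP eqT.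
have noshift (s : 'I_V) : s \in triangle q%:R p%:R -> p%:R + s \in triangle q%:R p%:R ->
    (p + q)%:R + s \in triangle q%:R p%:R -> False.
  rewrite !mem_triangle_natr ?val_add ?val_natr; try lia.
  by case/or3P => /eqP ->; rewrite !modn_small; lia.
have in0 : 0 \in triangle (p%:R : 'I_V) q%:R by rewrite /triangle !inE eqxx.
have inp : p%:R \in triangle (p%:R : 'I_V) q%:R by rewrite /triangle !inE eqxx orbT.
have inpq : (p + q)%:R \in triangle (p%:R : 'I_V) q%:R by rewrite /triangle !inE natrD eqxx !orbT.
rewrite eqT !mem_transl sub0r in in0 inp inpq.
exact: noshift in0 inp inpq.
Qed.

End CyclicOrbits.

Section Development.

Variables (w : nat) (I : finType) (base : I -> {set 'I_w.+2}) (wt : I -> nat).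

Definition develop : {ffun {set 'I_w.+2} -> nat} :=
  [ffun B => \sum_i wt i * (B \in orbitB (base i))].

Lemma develop_shiftB B : develop (shiftB B) = develop B.
Proof. by rewrite !ffunE shiftB_transl; apply: eq_bigr => i _; rewrite mem_orbitB_transl. Qed.

Lemma develop_gt0 B : 0 < develop B -> exists i, B \in orbitB (base i).
Proof.
rewrite ffunE; case: (pickP (fun i => B \in orbitB (base i))) => [i Bi | none]; first by exists i.
by rewrite big1 // => i _; rewrite none muln0.
Qed.

Lemma develop_card : (forall i, #|base i| = 3) -> forall B, 0 < develop B -> #|B| = 3.
Proof. by move=> card3 B /develop_gt0 [i /orbitBP [k ->]]; rewrite card_transl. Qed.

Lemma develop_pair : (forall i, injective (fun k => transl k (base i))) ->
  forall x y : 'I_w.+2, \sum_(B : {set 'I_w.+2} | (x \in B) && (y \in B)) develop B =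
                        \sum_i wt i * diffcount (base i) (y - x)%R.
Proof.
move=> full x y.
rewrite (eq_bigr (fun B => \sum_i wt i * (B \in orbitB (base i)))) => [|B _]; last by rewrite ffunE.
rewrite exchange_big /=; apply: eq_bigr => i _; rewrite -big_distrr /=; congr (_ * _).
transitivity (\sum_(B in orbitB (base i)) ((x \in B) && (y \in B) : nat)).
  rewrite big_mkcond [RHS]big_mkcond; apply: eq_bigr => B _.
  by case: (x \in B); case: (y \in B); case: (B \in _).
rewrite orbitBE big_imset /=; last by move=> k l _ _; apply: full.
by rewrite -sum_mem2_transl; apply: eq_bigl.
Qed.

Lemma develop_CTS lambda :
  (forall i, #|base i| = 3) -> (forall i, injective (fun k => transl k (base i))) ->
  (forall d, d != 0%R -> \sum_i wt i * diffcount (base i) d = lambda) ->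
  is_CTS lambda develop.
Proof.
move=> card3 full diffs; split; [exact: develop_card | | exact: develop_shiftB].
by move=> x y xy; rewrite develop_pair // diffs // subr_eq0 eq_sym.
Qed.

Hypothesis base_orbit_inj : injective (fun i => orbitB (base i)).

Lemma develop_orbit i B : B \in orbitB (base i) -> develop B = wt i.
Proof.
move=> Bi; rewrite ffunE (bigD1 i) //= Bi muln1 big1 ?addn0 // => j ji.
case Bj: (B \in orbitB (base j)); rewrite ?muln0 //.
by move: ji; rewrite (base_orbit_inj (etrans (esym (orbitB_mem Bj)) (orbitB_mem Bi))) eqxx.
Qed.

Lemma fine_c_develop r : 0 < r -> fine_c develop r = #|[set i | wt i == r]|.
Proof.
move=> r0; rewrite /fine_c.
suff -> : [set orbitB B | B in [set B | develop B == r]] =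
          [set orbitB (base i) | i in [set i | wt i == r]].
  by rewrite card_in_imset // => i j _ _ /base_orbit_inj.
apply/setP => O; apply/imsetP/imsetP => -[B].
  rewrite inE => /eqP devB ->.
  have [i Bi] : exists i, B \in orbitB (base i) by apply: develop_gt0; rewrite devB.
  by exists i; rewrite ?inE -?devB ?(develop_orbit Bi) ?(orbitB_mem Bi).
by move=> /[!inE] /eqP wtB ->; exists (base B); rewrite ?inE ?(develop_orbit (orbitB_id _)) ?wtB.
Qed.

End Development.

Section DifferenceTriples.

Variables (n : nat) (a b : nat -> nat).

Definition diff_triples : Prop :=
  (forall j, j < n -> [/\ 0 < a j, 0 < b j & a j + b j <= 3 * n]) /\
  (forall D, 0 < D <= 3 * n ->
     \sum_(j < n) ((D == a j) + (D == b j) + (D == a j + b j)) = 1).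

Hypothesis triples : diff_triples.

Lemma diff_triples_neq j : j < n -> a j != b j.
Proof.
have [bounds cover] := triples; move=> jn; have [a0 b0 abn] := bounds j jn.
apply/eqP => ab; have := cover (a j); rewrite (bigD1 (Ordinal jn)) //= ab eqxx; lia.
Qed.

Variable w : nat.
Hypothesis Vn : w.+2 = (6 * n).+1.
Local Notation V := w.+2.
Local Open Scope ring_scope.

Lemma sum_triple_diffs (d : 'I_V) : d != 0 ->
  (\sum_(j < n) triple_diffs (a j)%:R (b j)%:R d)%N = 1%N.
Proof.
wlog small : d / (val d <= 3 * n)%N.
  move=> gen d0; case: (leqP (val d) (3 * n)) => [small | big]; first exact: gen.
  under eq_bigr do rewrite -triple_diffsN.
  by apply: gen; rewrite ?oppr_eq0 // val_opp modn_small; lia.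
move=> d0; have [bounds cover] := triples.
have dpos : (0 < val d)%N by rewrite lt0n -[0%N]/(val (0 : 'I_V)) val_eqE.
rewrite -(cover (val d)) ?dpos //; apply: eq_bigr => j _.
by have [a0 b0 abn] := bounds j (ltn_ord j); rewrite triple_diffs_natr //; lia.
Qed.

Definition triple_block (X : 'I_n * bool) : {set 'I_V} :=
  if X.2 then triangle (b X.1)%:R (a X.1)%:R else triangle (a X.1)%:R (b X.1)%:R.

Lemma triple_natr_neq0 j : (j < n)%N ->
  [/\ (a j)%:R != 0 :> 'I_V, (b j)%:R != 0 :> 'I_V & (a j)%:R + (b j)%:R != 0 :> 'I_V].
Proof.
have [bounds _] := triples; move=> /bounds [a0 b0 abn].
have [aV bV abV] : [/\ a j < V, b j < V & a j + b j < V]%N by split; lia.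
by rewrite -natrD !natr_eq0_Zp // -!lt0n a0 b0 addn_gt0 a0.
Qed.

Lemma card_triple_block X : #|triple_block X| = 3.
Proof.
have [a0 b0 ab0] := triple_natr_neq0 (ltn_ord X.1).
by rewrite /triple_block; case: X.2; rewrite card_triangle // addrC.
Qed.

Lemma diffcount_triple_block X d : d != 0 ->
  diffcount (triple_block X) d = triple_diffs (a X.1)%:R (b X.1)%:R d.
Proof.
have [a0 b0 ab0] := triple_natr_neq0 (ltn_ord X.1).
rewrite /triple_block; case: X.2 => d0; last exact: diffcount_triangle.
by rewrite diffcount_triangle 1?triple_diffsC // addrC.
Qed.

Lemma triple_block_transl_inj X : injective (fun k => transl k (triple_block X)).
Proof.
apply: transl_inj; rewrite card_triple_block Vn -coprime_modr.
by rewrite (_ : (6 * n).+1 %% 3 = 1)%N //; lia.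
Qed.

Lemma triple_block_orbit_inj : injective (fun X => orbitB (triple_block X)).
Proof.
move=> [j e] [j' e'] /= eqO.
have [k eqX] : exists k, triple_block (j, e) = transl k (triple_block (j', e')).
  by apply/orbitBP; rewrite -eqO orbitB_id.
have [bounds _] := triples; have [a0 b0 abn] := bounds j (ltn_ord j).
pose dj : 'I_V := (a j)%:R.
have dj0 : dj != 0 by case: (triple_natr_neq0 (ltn_ord j)).
have jj' : j' = j.
  apply/eqP; apply: contraT => jj'.
  have same : triple_diffs (a j')%:R (b j')%:R dj = triple_diffs (a j)%:R (b j)%:R dj.
    have := diffcount_triple_block (j, e) dj0; have := diffcount_triple_block (j', e') dj0.
    by rewrite /= eqX diffcount_transl => <- <-.
  have pos : (0 < triple_diffs (a j)%:R (b j)%:R dj)%N by rewrite /triple_diffs eqxx.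
  by have := sum_triple_diffs dj0; rewrite (bigD1 j) // (bigD1 j') //= same; lia.
subst j'; congr pair; have ab := diff_triples_neq (ltn_ord j).
have small : ((a j + b j).*2 < V)%N by lia.
case: e e' eqX {eqO} => [] [] // eqX.
  have := triangle_transl_neq k b0 a0; rewrite eq_sym addnC.
  by move=> /(_ ab small) /eqP /(_ eqX).
by have /eqP /(_ eqX) := triangle_transl_neq k a0 b0 ab small.
Qed.

Definition triple_weight (i : nat) (X : 'I_n * bool) : nat :=
  (if X.1 < i then (if X.2 then 0 else 3) else (if X.2 then 1 else 2))%N.

Lemma cts_of_diff_triples i : (i <= n)%N ->
  exists m : {ffun {set 'I_V} -> nat},
    [/\ is_CTS 3 m, fine_c m 3 = i, fine_c m 2 = n - i & fine_c m 1 = n - i]%N.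
Proof.
move=> le_in; pose m := develop triple_block (triple_weight i); exists m.
have fineE r : (0 < r)%N -> fine_c m r =
    (\sum_(j < n) ((triple_weight i (j, true) == r) + (triple_weight i (j, false) == r)))%N.
  move=> r0; rewrite fine_c_develop //; last exact: triple_block_orbit_inj.
  rewrite -sum1dep_card big_mkcond sum_pair_bool; apply: eq_bigr => j _.
  by do 2 case: (_ == r).
split.
- apply: develop_CTS => [X | X | d d0]; first exact: card_triple_block.
    exact: triple_block_transl_inj.
  rewrite sum_pair_bool (eq_bigr (fun j : 'I_n => 3 * triple_diffs (a j)%:R (b j)%:R d)%N).
    by rewrite -big_distrr /= sum_triple_diffs.
  move=> j _; rewrite !diffcount_triple_block // -mulnDl /triple_weight /=.
  by case: (j < i)%N.
- rewrite fineE // -[RHS](sum_ord_lt le_in); apply: eq_bigr => j _.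
  by rewrite /triple_weight /=; case: (j < i)%N.
- rewrite fineE // -[RHS](sum_ord_ge le_in); apply: eq_bigr => j _.
  by rewrite /triple_weight /= ltnNge; case: (i <= j)%N.
- rewrite fineE // -[RHS](sum_ord_ge le_in); apply: eq_bigr => j _.
  by rewrite /triple_weight /= ltnNge; case: (i <= j)%N.
Qed.

End DifferenceTriples.


(* [f k] is the position of the first of the two entries [k] of a Skolem
   sequence of order [n]; the second one sits at [f k + k]. *)
Definition skolem n (f : nat -> nat) : Prop :=
  (forall k, 0 < k <= n -> 0 < f k /\ f k + k <= n.*2) /\
  (forall k1 k2 (e1 e2 : bool), 0 < k1 <= n -> 0 < k2 <= n ->
     f k1 + (if e1 then k1 else 0) = f k2 + (if e2 then k2 else 0) -> k1 = k2 /\ e1 = e2).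

Lemma skolem_cover n f : skolem n f -> forall P, 0 < P <= n.*2 ->
  \sum_(j < n) ((P == f j.+1) + (P == f j.+1 + j.+1)) = 1.
Proof.
move=> [range f_inj] P P_range.
pose g (X : 'I_n * bool) := f X.1.+1 + (if X.2 then X.1.+1 else 0).
rewrite -(inj_sum_cover (g := g) _ _ _ P_range).
- by rewrite sum_pair_bool; apply: eq_bigr => j _; rewrite /g /= addn0 addnC.
- by rewrite card_prod card_ord card_bool muln2.
- by move=> [j e]; have := range j.+1; have := ltn_ord j; rewrite /g; case: e => /=; lia.
move=> [j1 e1] [j2 e2] /f_inj /= eq12.
by have [/succn_inj/val_inj -> ->] := eq12 (ltn_ord j1) (ltn_ord j2).
Qed.

Lemma skolem_diff_triples n f : skolem n f ->
  diff_triples n (fun j => j.+1) (fun j => n + f j.+1).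
Proof.
move=> sk; have [range _] := sk; split.
  by move=> j jn; have := range j.+1; split; lia.
move=> D D_range; rewrite !big_split /=; case: (leqP D n) => [Dn | nD].
  have succ_inj : injective (fun j : 'I_n => j.+1) by move=> j1 j2 /succn_inj/val_inj.
  rewrite (inj_sum_cover (g := fun j : 'I_n => j.+1) (card_ord n) (@ltn_ord n) succ_inj);
    last by lia.
  rewrite !big1 // => j _; apply/eqP; rewrite eqb0; have := range j.+1; have := ltn_ord j; lia.
rewrite big1 => [|j _]; last by apply/eqP; rewrite eqb0; have := ltn_ord j; lia.
rewrite -big_split /= -(skolem_cover sk (P := D - n)); last by lia.
apply: eq_bigr => j _; congr (nat_of_bool _ + nat_of_bool _); apply/eqP/eqP; lia.
Qed.

Definition skolemb n f : bool :=
  all (fun k => (0 < f k) && (f k + k <= n.*2)) (iota 1 n) &&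
  all (fun k1 => all (fun k2 => all (fun e1 : bool => all (fun e2 : bool =>
      (f k1 + (if e1 then k1 else 0) != f k2 + (if e2 then k2 else 0)) ||
      ((k1 == k2) && (e1 == e2))) [:: true; false]) [:: true; false]) (iota 1 n)) (iota 1 n).

Lemma skolembP n f : skolemb n f -> skolem n f.
Proof.
have mem_bool (e : bool) : e \in [:: true; false] by case: e.
case/andP => /allP range /allP f_inj; split => [k k_n | k1 k2 e1 e2 k1_n k2_n eq12].
  by have /andP [] := range k ltac:(rewrite mem_iota; lia).
have /allP /(_ k2) := f_inj k1 ltac:(rewrite mem_iota; lia).
move=> /(_ ltac:(rewrite mem_iota; lia)) /allP /(_ e1 (mem_bool e1)) /allP /(_ e2 (mem_bool e2)).
by rewrite eq12 eqxx /= => /andP [/eqP -> /eqP ->].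
Qed.

Definition skolem_4s (s k : nat) : nat :=
  if ~~ odd k then 6 * s - k./2
  else if k == 1 then s
  else if k <= 2 * s - 3 then s + 1 + (2 * s - 1 - k)./2
  else if k == 2 * s - 1 then 2 * s
  else if k == 2 * s + 1 then s - 1
  else if k <= 4 * s - 3 then (4 * s - 1 - k)./2
  else 2 * s + 1.

Definition skolem_4s1 (s k : nat) : nat :=
  if ~~ odd k then 6 * s + 2 - k./2
  else if k == 1 then s + 1
  else if k <= 2 * s - 3 then s + 2 + (2 * s - 1 - k)./2
  else if k == 2 * s - 1 then 2 * s + 2
  else if k <= 4 * s - 1 then (4 * s + 1 - k)./2
  else 2 * s + 1.

Lemma skolem_4s_skolem s : 2 <= s -> skolem (4 * s) (skolem_4s s).
Proof.
move=> s2; rewrite /skolem_4s.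
split => [k /andP [k0 ks] | k1 k2 e1 e2 /andP [k10 k1s] /andP [k20 k2s]].
  by repeat case: ifP => ?; lia.
by case: e1; case: e2; repeat case: ifP => ?; lia.
Qed.

Lemma skolem_4s1_skolem s : 2 <= s -> skolem (4 * s + 1) (skolem_4s1 s).
Proof.
move=> s2; rewrite /skolem_4s1.
split => [k /andP [k0 ks] | k1 k2 e1 e2 /andP [k10 k1s] /andP [k20 k2s]].
  by repeat case: ifP => ?; lia.
by case: e1; case: e2; repeat case: ifP => ?; lia.
Qed.

Lemma skolem_exists n : (n %% 4 == 0) || (n %% 4 == 1) -> exists f, skolem n f.
Proof.
move=> n_mod4; have [s [-> | ->]] : exists s, n = 4 * s \/ n = 4 * s + 1.
- by exists (n %/ 4); lia.
- case: s => [|[|s]]; last by exists (skolem_4s s.+2); apply: skolem_4s_skolem.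
    by exists id; split; lia.
  by exists (nth 0 [:: 0; 1; 4; 5; 3]); apply: skolembP.
case: s => [|[|s]]; last by exists (skolem_4s1 s.+2); apply: skolem_4s1_skolem.
  by exists (fun _ => 1); apply: skolembP.
by exists (nth 0 [:: 0; 1; 7; 3; 4; 5]); apply: skolembP.
Qed.


Theorem mainTheorem8 (v i : nat) :
  (v %% 24 = 1 \/ v %% 24 = 7) -> 7 <= v -> i <= (v - 1) %/ 6 ->
  exists m : {ffun {set 'I_v} -> nat},
    [/\ is_CTS 3 m,
        fine_c m 2 = (v - 1) %/ 6 - i,
        fine_c m 3 = i
      & fine_c m 1 = 3 * ((v - 1) %/ 6) - 2 * fine_c m 2 - 3 * fine_c m 3].
Proof.
move=> v_mod v7 le_in; have [w v_eq] : exists w, v = w.+2 by exists (v - 2); lia.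
subst v; set n := (w.+2 - 1) %/ 6 in le_in *.
have Vn : w.+2 = (6 * n).+1 by lia.
have [f sk] := @skolem_exists n ltac:(lia).
have [m [cts c3 c2 c1]] := cts_of_diff_triples (skolem_diff_triples sk) Vn le_in.
by exists m; split => //; rewrite c1 c2 c3; lia.
Qed.
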